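(* Let $(N_r)_{r\in\mathbb{Z}}$ be the Narayana sequence. For every integer $a$ put $p_a=N_a+3N_{a-2}$, and for positive integers $a$ put $q_a=-p_{-a}$. Then for every positive integer $a$ and every integer $m$ with $a<m$, $$N_{m}=p_{a}N_{m-a}+q_{a}N_{m-2a}+N_{m-3a}.$$
   Context: The Narayana sequence $(N_r)_{r\in\mathbb{Z}}$ is defined by $N_0=0$, $N_1=N_2=1$ and $N_r=N_{r-1}+N_{r-3}$ for all integers $r$ (extended to negative indices via $N_{r-3}=N_r-N_{r-1}$). *)

From Stdlib Require Import ZArith.
Open Scope Z_scope.

(* Forward: (N_n, N_{n+1}, N_{n+2}) for n : nat. *)
Fixpoint nar_fwd (n : nat) : Z * Z * Z :=
  match n with
  | O => (0, 1, 1)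
  | S k => let '(x, y, z) := nar_fwd k in (y, z, z + x)
  end.

(* Backward: (N_{-n}, N_{-n+1}, N_{-n+2}) for n : nat,
   using N_{r-3} = N_r - N_{r-1}. *)
Fixpoint nar_bwd (n : nat) : Z * Z * Z :=
  match n with
  | O => (0, 1, 1)
  | S k => let '(x, y, z) := nar_bwd k in (z - y, x, y)
  end.

(* The Narayana sequence N : Z -> Z, N_0=0, N_1=N_2=1, N_r = N_{r-1}+N_{r-3}. *)
Definition Narayana (r : Z) : Z :=
  match r with
  | Z0 => 0
  | Zpos p => let '(x, _, _) := nar_fwd (Pos.to_nat p) in x
  | Zneg p => let '(x, _, _) := nar_bwd (Pos.to_nat p) in x
  end.

Definition p_ (a : Z) : Z := Narayana a + 3 * Narayana (a - 2).
Definition q_ (a : Z) : Z := - p_ (- a).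

Example N_check : List.map Narayana (List.cons (-4) (List.cons (-3) (List.cons (-2) (List.cons (-1) (List.cons 0 (List.cons 1 (List.cons 2 (List.cons 3 (List.cons 6 List.nil)))))))))
  = List.cons (-1) (List.cons 0 (List.cons 1 (List.cons 0 (List.cons 0 (List.cons 1 (List.cons 1 (List.cons 1 (List.cons 4 List.nil)))))))).
Proof. reflexivity. Qed.

(* The window w(r) = (N_r, N_{r+1}, N_{r+2}) is shifted by the companion matrix
   C of x^3 - x^2 - 1, so its n-th power P(n), defined for every integer n,
   satisfies P(n) w(s) = w(n + s).  Applying Cayley-Hamilton to P(a) and reading
   off the first coordinate on w(m - 3a) gives the identity with the
   coefficients tr P(a), e2 P(a) and det P(a).  Here tr P(a) = N_a + 3 N_{a-2}
   = p_a, det P(a) = det(C)^a = 1, and since P(-a) is the inverse of P(a),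
   e2 P(a) = det P(a) tr P(-a) = p_{-a} = -q_a.  The identity therefore holds
   for all integers a and m. *)
From Stdlib Require Import ZArith Lia.
Open Scope Z_scope.

Local Notation N := Narayana.

Lemma Narayana_of_nat n : N (Z.of_nat n) = fst (fst (nar_fwd n)).
Proof.
  destruct n as [|n]; [reflexivity|].
  change (Z.of_nat (S n)) with (Zpos (Pos.of_succ_nat n)).
  unfold Narayana; rewrite SuccNat2Pos.id_succ.
  now destruct (nar_fwd (S n)) as [[x y] z].
Qed.

Lemma Narayana_opp_of_nat n : N (- Z.of_nat n) = fst (fst (nar_bwd n)).
Proof.
  destruct n as [|n]; [reflexivity|].
  change (- Z.of_nat (S n)) with (Zneg (Pos.of_succ_nat n)).
  unfold Narayana; rewrite SuccNat2Pos.id_succ.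
  now destruct (nar_bwd (S n)) as [[x y] z].
Qed.

Lemma nar_fwd_rec n :
  fst (fst (nar_fwd (3 + n))) = fst (fst (nar_fwd (2 + n))) + fst (fst (nar_fwd n)).
Proof. cbn; now destruct (nar_fwd n) as [[x y] z]. Qed.

Lemma nar_bwd_rec n :
  fst (fst (nar_bwd (3 + n))) = fst (fst (nar_bwd n)) - fst (fst (nar_bwd (1 + n))).
Proof. cbn; now destruct (nar_bwd n) as [[x y] z]. Qed.

Lemma Narayana_rec r : N (r + 3) = N (r + 2) + N r.
Proof.
  destruct (Z_le_gt_dec 0 r) as [Hr | Hr].
  - set (n := Z.to_nat r).
    replace (r + 3) with (Z.of_nat (3 + n)) by lia.
    replace (r + 2) with (Z.of_nat (2 + n)) by lia.
    replace r with (Z.of_nat n) by lia.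
    rewrite !Narayana_of_nat; apply nar_fwd_rec.
  - destruct (Z.eq_dec r (-1)) as [->|Hr1]; [reflexivity|].
    destruct (Z.eq_dec r (-2)) as [->|Hr2]; [reflexivity|].
    set (n := Z.to_nat (- r - 3)).
    replace (r + 3) with (- Z.of_nat n) by lia.
    replace (r + 2) with (- Z.of_nat (1 + n)) by lia.
    replace r with (- Z.of_nat (3 + n)) by lia.
    rewrite !Narayana_opp_of_nat, nar_bwd_rec; ring.
Qed.

Lemma Z_ind_succ (Q : Z -> Prop) :
  Q 0 -> (forall n, Q n <-> Q (n + 1)) -> forall n, Q n.
Proof.
  intros H0 HS; apply Z.peano_ind; [exact H0 | |]; intros n Hn.
  - rewrite <- Z.add_1_r; apply (HS n), Hn.
  - apply (HS (Z.pred n)); rewrite <- Z.sub_1_r, Z.sub_add; exact Hn.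
Qed.

Record vec3 := Vec3 { x1 : Z; x2 : Z; x3 : Z }.

Record mat3 := Mat3
  { m11 : Z; m12 : Z; m13 : Z; m21 : Z; m22 : Z; m23 : Z; m31 : Z; m32 : Z; m33 : Z }.

Definition mat_vec (A : mat3) (v : vec3) : vec3 :=
  Vec3 (m11 A * x1 v + m12 A * x2 v + m13 A * x3 v)
       (m21 A * x1 v + m22 A * x2 v + m23 A * x3 v)
       (m31 A * x1 v + m32 A * x2 v + m33 A * x3 v).

Local Infix "*v" := mat_vec (at level 30, right associativity).

Definition mat_of_cols (u v w : vec3) : mat3 :=
  Mat3 (x1 u) (x1 v) (x1 w) (x2 u) (x2 v) (x2 w) (x3 u) (x3 v) (x3 w).

Definition mat_mul (A B : mat3) : mat3 :=
  mat_of_cols (A *v Vec3 (m11 B) (m21 B) (m31 B))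
              (A *v Vec3 (m12 B) (m22 B) (m32 B))
              (A *v Vec3 (m13 B) (m23 B) (m33 B)).

Definition mat_id : mat3 := Mat3 1 0 0 0 1 0 0 0 1.

Definition trace (A : mat3) : Z := m11 A + m22 A + m33 A.

Definition minors2 (A : mat3) : Z :=
  (m11 A * m22 A - m12 A * m21 A) + (m11 A * m33 A - m13 A * m31 A)
  + (m22 A * m33 A - m23 A * m32 A).

Definition det (A : mat3) : Z :=
  m11 A * (m22 A * m33 A - m23 A * m32 A) - m12 A * (m21 A * m33 A - m23 A * m31 A)
  + m13 A * (m21 A * m32 A - m22 A * m31 A).

Definition adjugate (A : mat3) : mat3 :=
  Mat3 (m22 A * m33 A - m23 A * m32 A) (m13 A * m32 A - m12 A * m33 A)
       (m12 A * m23 A - m13 A * m22 A)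
       (m23 A * m31 A - m21 A * m33 A) (m11 A * m33 A - m13 A * m31 A)
       (m13 A * m21 A - m11 A * m23 A)
       (m21 A * m32 A - m22 A * m31 A) (m12 A * m31 A - m11 A * m32 A)
       (m11 A * m22 A - m12 A * m21 A).

Local Ltac mat_cbn :=
  unfold mat_mul, mat_vec, mat_of_cols, mat_id, trace, minors2, det, adjugate in *;
  cbn [x1 x2 x3 m11 m12 m13 m21 m22 m23 m31 m32 m33] in *.

Lemma mat_vec_id v : mat_id *v v = v.
Proof. destruct v; mat_cbn; f_equal; ring. Qed.

Lemma mat_vec_mul A B v : mat_mul A B *v v = A *v B *v v.
Proof. destruct A, B, v; mat_cbn; f_equal; ring. Qed.

Lemma mat_mul_id_r A : mat_mul A mat_id = A.
Proof. destruct A; mat_cbn; f_equal; ring. Qed.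

Lemma mat_eq_on_basis A B :
  A *v Vec3 1 0 0 = B *v Vec3 1 0 0 -> A *v Vec3 0 1 0 = B *v Vec3 0 1 0 ->
  A *v Vec3 0 0 1 = B *v Vec3 0 0 1 -> A = B.
Proof.
  destruct A, B; mat_cbn; intros E1 E2 E3.
  rewrite !Z.mul_1_r, !Z.mul_0_r, !Z.add_0_r, ?Z.add_0_l in *.
  injection E1 as -> -> ->; injection E2 as -> -> ->; injection E3 as -> -> ->.
  reflexivity.
Qed.

Lemma mat_mul_assoc A B C : mat_mul A (mat_mul B C) = mat_mul (mat_mul A B) C.
Proof. destruct A, B, C; mat_cbn; f_equal; ring. Qed.

Lemma mat_mul_cols A u v w :
  mat_mul A (mat_of_cols u v w) = mat_of_cols (A *v u) (A *v v) (A *v w).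
Proof. now destruct u, v, w. Qed.

Lemma det_mul A B : det (mat_mul A B) = det A * det B.
Proof. destruct A, B; mat_cbn; ring. Qed.

Lemma trace_adjugate A : trace (adjugate A) = minors2 A.
Proof. destruct A; mat_cbn; ring. Qed.

Lemma adjugate_mul A : mat_mul (adjugate A) A = Mat3 (det A) 0 0 0 (det A) 0 0 0 (det A).
Proof. destruct A; mat_cbn; f_equal; ring. Qed.

Lemma minors2_right_inverse A B : mat_mul A B = mat_id -> minors2 A = det A * trace B.
Proof.
  intros AB.
  rewrite <- trace_adjugate, <- (mat_mul_id_r (adjugate A)), <- AB, mat_mul_assoc,
    adjugate_mul.
  destruct B; mat_cbn; ring.
Qed.

Lemma cayley_hamilton_x1 A v :
  x1 (A *v A *v A *v v) = trace A * x1 (A *v A *v v) - minors2 A * x1 (A *v v) + det A * x1 v.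
Proof. destruct A, v; mat_cbn; ring. Qed.

Definition window (r : Z) : vec3 := Vec3 (N r) (N (r + 1)) (N (r + 2)).

Definition companion : mat3 := Mat3 0 1 0 0 0 1 1 0 1.

Lemma companion_inj u v : companion *v u = companion *v v -> u = v.
Proof.
  destruct u, v; unfold companion; mat_cbn; intros E.
  rewrite !Z.mul_1_l, !Z.mul_0_l, !Z.add_0_l, ?Z.add_0_r in E.
  injection E as E1 E2 E3; f_equal; lia.
Qed.

Lemma companion_window r : companion *v window r = window (r + 1).
Proof.
  unfold companion, window; mat_cbn; f_equal.
  - ring.
  - replace (r + 1 + 1) with (r + 2) by ring; ring.
  - replace (r + 1 + 2) with (r + 3) by ring; rewrite Narayana_rec; ring.
Qed.

(* window (-2), window (-3) and window (-1) are the standard basis vectors,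
   so these columns are the images of the basis under the n-th shift. *)
Definition companion_pow (n : Z) : mat3 :=
  mat_of_cols (window (n - 2)) (window (n - 3)) (window (n - 1)).

Lemma companion_pow_0 : companion_pow 0 = mat_id.
Proof. reflexivity. Qed.

Lemma companion_pow_succ n : companion_pow (n + 1) = mat_mul companion (companion_pow n).
Proof.
  unfold companion_pow; rewrite mat_mul_cols, !companion_window.
  f_equal; f_equal; ring.
Qed.

Lemma companion_pow_window n s : companion_pow n *v window s = window (n + s).
Proof.
  revert s; apply (Z_ind_succ (fun n => forall s, companion_pow n *v window s = window (n + s))).
  - intros s; now rewrite companion_pow_0, mat_vec_id.
  - intros k; split; intros H s.
    + rewrite companion_pow_succ, mat_vec_mul, H, companion_window; f_equal; ring.
    + apply companion_inj.
      rewrite <- mat_vec_mul, <- companion_pow_succ, H, companion_window; f_equal; ring.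
Qed.

Lemma mat_eq_on_windows A B : (forall s, A *v window s = B *v window s) -> A = B.
Proof.
  intros H; apply mat_eq_on_basis; [exact (H (-2)) | exact (H (-3)) | exact (H (-1))].
Qed.

Lemma companion_pow_mul_opp a : mat_mul (companion_pow a) (companion_pow (- a)) = mat_id.
Proof.
  apply mat_eq_on_windows; intros s.
  rewrite mat_vec_mul, mat_vec_id, !companion_pow_window; f_equal; ring.
Qed.

Lemma det_companion_pow n : det (companion_pow n) = 1.
Proof.
  apply (Z_ind_succ (fun n => det (companion_pow n) = 1)); [reflexivity|].
  intros k; rewrite companion_pow_succ, det_mul.
  change (det companion) with 1; rewrite Z.mul_1_l; reflexivity.
Qed.

Lemma trace_companion_pow a : trace (companion_pow a) = p_ a.
Proof.
  unfold companion_pow, window, p_; mat_cbn.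
  pose proof (Narayana_rec (a - 2)) as R.
  replace (a - 2 + 3) with (a - 1 + 2) in R by ring.
  replace (a - 2 + 2) with a in R by ring.
  replace (a - 3 + 1) with (a - 2) by ring.
  lia.
Qed.

Lemma minors2_companion_pow a : minors2 (companion_pow a) = p_ (- a).
Proof.
  rewrite (minors2_right_inverse _ _ (companion_pow_mul_opp a)).
  now rewrite det_companion_pow, trace_companion_pow, Z.mul_1_l.
Qed.

Lemma Narayana_multisection a s :
  N (3 * a + s) = p_ a * N (2 * a + s) - p_ (- a) * N (a + s) + N s.
Proof.
  pose proof (cayley_hamilton_x1 (companion_pow a) (window s)) as CH.
  rewrite !companion_pow_window, trace_companion_pow, minors2_companion_pow,
    det_companion_pow in CH.
  unfold window in CH; mat_cbn.
  replace (a + (a + (a + s))) with (3 * a + s) in CH by ring.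
  replace (a + (a + s)) with (2 * a + s) in CH by ring.
  lia.
Qed.

Theorem theorem3 : forall a m : Z, 0 < a -> a < m ->
  Narayana m = p_ a * Narayana (m - a) + q_ a * Narayana (m - 2 * a) + Narayana (m - 3 * a).
Proof.
  intros a m _ _.
  pose proof (Narayana_multisection a (m - 3 * a)) as E.
  replace (3 * a + (m - 3 * a)) with m in E by ring.
  replace (2 * a + (m - 3 * a)) with (m - a) in E by ring.
  replace (a + (m - 3 * a)) with (m - 2 * a) in E by ring.
  unfold q_; lia.
Qed.
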